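(* Consider POWERSET SALIQUOT. Then $\mathcal{SG}(0)=0$, and $\mathcal{SG}(n)=2^p$, if $2^p$ is largest power of two divisor of $n\ge 1$.
   Context: POWERSET SALIQUOT is the impartial normal-play game on nonnegative integer heaps where from a heap $n\ge1$ a player chooses any nonempty set $S$ of positive divisors of $n$ and moves to the disjunctive sum of the heaps $n-d$, $d\in S$; the heap $0$ is terminal. $\mathcal{SG}$ denotes the Sprague-Grundy value (mex rule, nim-sum). *)

From Stdlib Require PeanoNat.
From mathcomp Require Import all_boot.
Set Implicit Arguments. Unset Strict Implicit. Unset Printing Implicit Defensive.

(* all subsequences (= subsets, for a duplicate-free list) of s *)
Fixpoint subseqs (s : seq nat) : seq (seq nat) :=
  if s is x :: s' then let r := subseqs s' in r ++ map (cons x) r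
  else [:: [::]].

Definition nimsum (s : seq nat) : nat := foldr Nat.lxor 0 s.

Definition mex (s : seq nat) : nat :=
  find (fun m => m \notin s) (iota 0 (size s).+1).

(* Grundy values computed by fuel-bounded recursion: from heap n >= 1
   a move picks a nonempty set S of positive divisors of n and goes to the
   disjunctive sum of heaps n - d, d in S; its value is the nim-sum. *)
Fixpoint sg_fuel (k n : nat) : nat :=
  match k with
  | 0 => 0
  | k'.+1 =>
    if n is 0 then 0 else
    mex [seq nimsum [seq sg_fuel k' (n - d) | d <- D]
        | D <- subseqs (divisors n) & D != [::]]
  end.

(* Sprague-Grundy value of heap n in POWERSET SALIQUOT
   (fuel n.+1 suffices since every move strictly decreases heap sizes) *)
Definition SG (n : nat) : nat := sg_fuel n.+1 n.

From mathcomp Require Import all_boot.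
From Stdlib Require PeanoNat.

(* Let p be the 2-adic valuation of n > 0.  For a proper divisor d of n we have
   n - d = d * (n/d - 1), and exactly one of n/d - 1 and n/d is even, so the
   valuation of n - d differs from p.  Hence, inductively, no option of n has
   a Grundy value with bit p set, and 2^p is not an option value.  Conversely,
   for q < p the heap n - 2^q has valuation q, so moving to the heaps n - 2^q
   for the set bits q of any 0 < j < 2^p yields the value j; the value 0 is
   reached by moving to n - n = 0. *)

Set Implicit Arguments.
Unset Strict Implicit.
Unset Printing Implicit Defensive.

Lemma mex_eq s m : m \notin s -> (forall j, j < m -> j \in s) -> mex s = m.
Proof.
move=> sNm below.
have m_le_size : m <= size s.
  rewrite -[m in m <= _](size_iota 0); apply: uniq_leq_size; first exact: iota_uniq.
  by move=> j; rewrite mem_iota => /andP[_ /below].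
rewrite /mex -(subnKC (leqW m_le_size)) iotaD find_cat size_iota.
have -> : has (fun j => j \notin s) (iota 0 m) = false.
  by apply/hasPn => j; rewrite mem_iota => /andP[_ /below ->].
by rewrite subSn //= sNm addn0.
Qed.

Lemma mem_subseqs D s : (D \in subseqs s) = subseq D s.
Proof.
elim: s D => [|x s IH] D /=; first by rewrite inE; case: D.
rewrite mem_cat IH; case: D => [|y D] /=; first by rewrite sub0seq.
case: eqP => [->|ne]; last first.
  by apply/orb_idr => /mapP[D' _ [/ne]].
have cons_inj : injective (cons x) by move=> ? ? [].
rewrite (mem_map cons_inj) IH orbC; apply/orb_idr; exact: cons_subseq.
Qed.

Lemma sorted_subset_subseq (T : eqType) (leT : rel T) s1 s2 :
  irreflexive leT -> transitive leT -> sorted leT s1 -> sorted leT s2 ->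
  {subset s1 <= s2} -> subseq s1 s2.
Proof.
move=> irr tr sorted1 sorted2 sub12.
suff <- : [seq x <- s2 | x \in s1] = s1 by exact: filter_subseq.
apply: (irr_sorted_eq tr irr) => //; first exact: sorted_filter.
by move=> x; rewrite mem_filter andb_idr //; apply: sub12.
Qed.

Lemma expn_pow m n : m ^ n = Nat.pow m n.
Proof. by elim: n => // n IH; rewrite expnS IH. Qed.

Lemma testbit_pow2 q r : Nat.testbit (2 ^ q) r = (q == r).
Proof.
rewrite expn_pow PeanoNat.Nat.pow2_bits_eqb.
by case: PeanoNat.Nat.eqb_spec => [->|/eqP/negbTE->]; rewrite ?eqxx.
Qed.

Lemma testbit_ltn_pow2 j p q : j < 2 ^ p -> p <= q -> Nat.testbit j q = false.
Proof.
move=> /ltP j_lt /leP p_le; rewrite -(PeanoNat.Nat.mod_small _ _ j_lt) expn_pow.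
exact: PeanoNat.Nat.mod_pow2_bits_high.
Qed.

Lemma testbit_nimsum s q :
  Nat.testbit (nimsum s) q = odd (count (fun y => Nat.testbit y q) s).
Proof.
elim: s => [|y s IH] /=; first exact: PeanoNat.Nat.bits_0.
by rewrite PeanoNat.Nat.lxor_spec IH oddD; case: Nat.testbit.
Qed.

Lemma nimsum_binary j p :
  j < 2 ^ p -> nimsum [seq 2 ^ q | q <- iota 0 p & Nat.testbit j q] = j.
Proof.
move=> j_lt; apply: PeanoNat.Nat.bits_inj => r.
rewrite testbit_nimsum count_map (eq_count (a2 := pred1 r)); last first.
  by move=> q; rewrite /= testbit_pow2.
rewrite count_uniq_mem ?filter_uniq ?iota_uniq // mem_filter mem_iota /=.
case: (ltnP r p) => [r_lt|p_le]; first by rewrite andbT; case: Nat.testbit.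
by rewrite (testbit_ltn_pow2 j_lt p_le).
Qed.

Lemma logn2_gt0 m : 0 < m -> (0 < logn 2 m) = ~~ odd m.
Proof. by move=> m_gt0; rewrite logn_gt0 mem_primes m_gt0 dvdn2. Qed.

Lemma logn2_odd m : odd m -> logn 2 m = 0.
Proof. by move=> m_odd; apply: logn_coprime; rewrite coprime2n. Qed.

Lemma logn2_predn_neq k : 1 < k -> logn 2 k.-1 != logn 2 k.
Proof.
case: k => [|[|k]] // _; apply/eqP => /(congr1 (leq 1)).
by rewrite !logn2_gt0 //=; case: odd.
Qed.

Lemma logn2_sub_dvdn n d : 0 < d -> d < n -> d %| n ->
  logn 2 (n - d) = logn 2 d + logn 2 (n %/ d).-1.
Proof.
move=> d_gt0 d_lt dvd_dn.
have quo_gt1 : 1 < n %/ d by rewrite ltn_divRL // mul1n.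
have -> : n - d = (n %/ d).-1 * d by rewrite -subn1 mulnBl mul1n divnK.
by rewrite addnC lognM // -subn1 subn_gt0.
Qed.

Lemma logn2_sub_dvdn_neq n d : 0 < n -> d < n -> d %| n ->
  logn 2 (n - d) != logn 2 n.
Proof.
move=> n_gt0 d_lt dvd_dn; have d_gt0 := dvdn_gt0 n_gt0 dvd_dn.
have quo_gt1 : 1 < n %/ d by rewrite ltn_divRL // mul1n.
rewrite logn2_sub_dvdn // -{2}(divnK dvd_dn) lognM ?(ltnW quo_gt1) //.
by rewrite [X in _ != X]addnC eqn_add2l logn2_predn_neq.
Qed.

Lemma ltn_pow2_logn n q : 0 < n -> q < logn 2 n -> 2 ^ q < n.
Proof.
move=> n_gt0 q_lt; apply: leq_trans (dvdn_leq n_gt0 (pfactor_dvdnn 2 n)).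
by rewrite ltn_exp2l.
Qed.

Lemma logn2_sub_pow2 n q : 0 < n -> q < logn 2 n -> logn 2 (n - 2 ^ q) = q.
Proof.
move=> n_gt0 q_lt.
have dvd_qn : 2 ^ q %| n by rewrite pfactor_dvdn // ltnW.
have pow_lt : 2 ^ q < n by exact: ltn_pow2_logn.
suff odd_part : logn 2 (n %/ 2 ^ q).-1 = 0.
  by rewrite (logn2_sub_dvdn (expn_gt0 2 q) pow_lt dvd_qn) pfactorK ?odd_part ?addn0.
have quo_gt0 : 0 < n %/ 2 ^ q by rewrite divn_gt0 ?expn_gt0 // ltnW.
have : 0 < logn 2 (n %/ 2 ^ q) by rewrite logn_div // pfactorK // subn_gt0.
rewrite logn2_gt0 //; case: (n %/ 2 ^ q) quo_gt0 => // k _ /negbNE.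
exact: logn2_odd.
Qed.

Definition sg_formula (n : nat) : nat := if n is 0 then 0 else 2 ^ logn 2 n.

Lemma sg_formula_gt0 m : 0 < m -> sg_formula m = 2 ^ logn 2 m.
Proof. by case: m. Qed.

Lemma sg_formula_sub_pow2 n q :
  0 < n -> q < logn 2 n -> sg_formula (n - 2 ^ q) = 2 ^ q.
Proof.
move=> n_gt0 q_lt.
by rewrite sg_formula_gt0 ?subn_gt0 ?ltn_pow2_logn ?logn2_sub_pow2.
Qed.

Lemma testbit_sg_formula_sub_divisor n d : 0 < n -> d \in divisors n ->
  Nat.testbit (sg_formula (n - d)) (logn 2 n) = false.
Proof.
move=> n_gt0; rewrite -dvdn_divisors // => dvd_dn.
case: (ltngtP d n) => [d_lt | n_lt | ->].
- rewrite sg_formula_gt0 ?subn_gt0 // testbit_pow2.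
  exact/negbTE/logn2_sub_dvdn_neq.
- by move: (dvdn_leq n_gt0 dvd_dn); rewrite leqNgt n_lt.
- by rewrite subnn; apply: PeanoNat.Nat.bits_0.
Qed.

Definition option_values (g : nat -> nat) (n : nat) : seq nat :=
  [seq nimsum [seq g (n - d) | d <- D] | D <- subseqs (divisors n) & D != [::]].

Lemma option_valuesP g n v :
  reflect (exists2 D, subseq D (divisors n) && (D != [::])
                    & v = nimsum [seq g (n - d) | d <- D])
          (v \in option_values g n).
Proof.
apply: (iffP mapP) => -[D D_in ->]; exists D => //;
  by move: D_in; rewrite mem_filter mem_subseqs andbC.
Qed.

Lemma pow2_logn_notin_option_values n :
  0 < n -> 2 ^ logn 2 n \notin option_values sg_formula n.
Proof.
move=> n_gt0; apply/option_valuesP => -[D /andP[sub_D _] val].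
have := testbit_pow2 (logn 2 n) (logn 2 n).
rewrite eqxx val testbit_nimsum count_map (eq_in_count (a2 := pred0)) ?count_pred0 //.
by move=> d d_in /=; rewrite testbit_sg_formula_sub_divisor ?(mem_subseq sub_D).
Qed.

Lemma mem_option_values_ltn n j :
  0 < n -> j < 2 ^ logn 2 n -> j \in option_values sg_formula n.
Proof.
move=> n_gt0 j_lt; apply/option_valuesP.
have [-> | j_gt0] := posnP j.
  exists [:: n]; first by rewrite sub1seq -dvdn_divisors // dvdnn.
  by rewrite /= subnn.
set D := [seq 2 ^ q | q <- iota 0 (logn 2 n) & Nat.testbit j q].
have values_D : [seq sg_formula (n - d) | d <- D] = D.
  rewrite -map_comp; apply/eq_in_map => q.
  by rewrite mem_filter mem_iota => /andP[_ q_lt]; apply: sg_formula_sub_pow2.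
have sorted_D : sorted ltn D.
  rewrite sorted_map; apply: sub_sorted (sorted_filter ltn_trans _ (iota_ltn_sorted 0 _)).
  by move=> p q /=; rewrite ltn_exp2l.
have D_divisors : {subset D <= divisors n}.
  move=> d /mapP[q]; rewrite mem_filter mem_iota => /andP[_ q_lt] ->.
  by rewrite -dvdn_divisors // pfactor_dvdn // ltnW.
exists D; last by rewrite values_D nimsum_binary.
apply/andP; split.
  exact: sorted_subset_subseq ltnn ltn_trans sorted_D (sorted_divisors_ltn n) D_divisors.
by apply/eqP => D_nil; move: j_gt0; rewrite -(nimsum_binary j_lt) -/D D_nil.
Qed.

Lemma mex_option_values n :
  0 < n -> mex (option_values sg_formula n) = 2 ^ logn 2 n.
Proof.
move=> n_gt0; apply: mex_eq; first exact: pow2_logn_notin_option_values.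
by move=> j; apply: mem_option_values_ltn.
Qed.

Lemma sg_fuel_formula k n : n < k -> sg_fuel k n = sg_formula n.
Proof.
elim: k n => [|k IH] [|n] // /ltnSE n_lt.
change (mex (option_values (sg_fuel k) n.+1) = 2 ^ logn 2 n.+1).
rewrite -mex_option_values //; congr mex; apply/eq_in_map => D.
rewrite mem_filter mem_subseqs => /andP[_ sub_D]; congr nimsum.
apply/eq_in_map => d /(mem_subseq sub_D); rewrite -dvdn_divisors // => dvd_d.
apply: IH; apply: leq_trans n_lt.
by rewrite ltn_subrL (dvdn_gt0 _ dvd_d).
Qed.

Theorem mainTheorem15 :
  SG 0 = 0 /\ (forall n : nat, 0 < n -> SG n = 2 ^ logn 2 n).
Proof.
split=> [|n n_gt0]; first by [].
by rewrite /SG sg_fuel_formula // sg_formula_gt0.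
Qed.
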